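(* Let $k\ge 0$ be an integer and let $f_k(x)\in\mathbb{Q}[x]$ be a monic polynomial of degree $k+1$ such that for all integers $g>3k$, \[\#\{S\in\mathcal{S}_g\mid m(S)=g-k\}=\frac{1}{(k+1)!}f_k(g).\] Then $f_k(x)$ has integer coefficients.
   Context: A numerical semigroup $S$ is a submonoid of $\mathbb{N}_0$ with finite complement; its genus is the size of the complement and $m(S)$ its smallest nonzero element. $\mathcal{S}_g$ is the set of numerical semigroups of genus $g$. (It is known that for each $k\ge0$ such a monic polynomial $f_k$ of degree $k+1$ exists.) *)

From mathcomp Require Import all_boot all_order all_algebra.
From mathcomp Require Import finmap.
Set Implicit Arguments. Unset Strict Implicit. Unset Printing Implicit Defensive.
Import GRing.Theory Num.Theory.
Local Open Scope fset_scope.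

(* A numerical semigroup S (submonoid of N_0 with finite complement) is
   represented by its (finite) set of gaps G = N_0 \ S.  S = {n | n \notin G}. *)
Definition is_numsg (G : {fset nat}) : Prop :=
  (0 \notin G) /\ (forall x y : nat, x \notin G -> y \notin G -> (x + y)%N \notin G).

Definition genus (G : {fset nat}) : nat := #|` G|.

Definition multiplicity_is (G : {fset nat}) (m : nat) : Prop :=
  [/\ (0 < m)%N, m \notin G & forall j : nat, (0 < j < m)%N -> j \in G].

Definition has_card (P : {fset nat} -> Prop) (n : nat) : Prop :=
  exists l : seq {fset nat}, [/\ uniq l, size l = n & forall G, G \in l <-> P G].

Definition num_sg_genus_mult (g m n : nat) : Prop :=
  has_card (fun G => [/\ is_numsg G, genus G = g & multiplicity_is G m]) n.

(* The hypothesis makes q := f / (k+1)! integral at the k + 2 consecutive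
   integers 3k+1, ..., 4k+2, and deg q = k + 1.  A polynomial q of degree at
   most n that is integral at x, x + 1, ..., x + n (x an integer) satisfies
   n! q in Z[X]: the monic W := (X - x)(X - x - 1)...(X - x - n + 1) vanishes at
   x, ..., x + n - 1 and equals n! at x + n, so n! q_n is an integer and
   q - q_n W has smaller degree and is still integral at the first n points;
   as W (x + m) = n! binom(m, n), it is moreover integral at every x + m, which
   keeps the induction going. *)

From mathcomp Require Import all_boot all_order all_algebra.
Import GRing.Theory Num.Theory.
Local Open Scope ring_scope.

Lemma size_sub_lead_monic (R : nzRingType) (p w : {poly R}) (n : nat) :
  w \is monic -> size w = n.+2 -> (size p <= n.+2)%N ->
  (size (p - p`_n.+1 *: w)%R <= n.+1)%N.
Proof.
move=> /monicP w_monic size_w size_p; apply/leq_sizeP => j.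
rewrite leq_eqVlt => /orP[/eqP <- | n1_lt_j]; rewrite coefB coefZ.
  by move: w_monic; rewrite /lead_coef size_w /= => ->; rewrite mulr1 subrr.
by rewrite (leq_sizeP _ _ size_p j) 1?(leq_sizeP _ _ (eq_leq size_w) j) // mulr0 subrr.
Qed.

Section ShiftedFallingFactorial.
Context {R : comNzRingType}.

Definition shift_ffact_poly (x : R) (n : nat) : {poly R} :=
  \prod_(0 <= i < n) ('X - (x + i%:R)%:P).

Lemma horner_shift_ffact_poly (x : R) (n m : nat) :
  (shift_ffact_poly x n).[x + m%:R] = (m ^_ n)%:R.
Proof.
rewrite horner_prod; elim: n => [|n IHn]; first by rewrite big_nil.
rewrite big_nat_recr //= IHn hornerXsubC ffactnSr.
have [m_lt_n | n_le_m] := ltnP m n; first by rewrite ffact_small // !mul0r.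
by rewrite natrM natrB // opprD addrACA subrr add0r.
Qed.

Lemma size_shift_ffact_poly (x : R) (n : nat) : size (shift_ffact_poly x n) = n.+1.
Proof. by rewrite size_prod_XsubC size_iota subn0. Qed.

Lemma shift_ffact_poly_monic (x : R) (n : nat) : shift_ffact_poly x n \is monic.
Proof. exact: monic_prod_XsubC. Qed.

End ShiftedFallingFactorial.

(* [polyOver Num.int_num_subdef] is [polyOver Num.int], stated through the
   underlying predicate so that its subring-closure instance is inferred. *)
Section IntegerValuedPolynomials.
Context {R : archiNumDomainType}.

Lemma shift_ffact_poly_int (x : R) (n : nat) :
  x \is a Num.int -> shift_ffact_poly x n \is a polyOver Num.int_num_subdef.
Proof.
move=> x_int; rewrite /shift_ffact_poly rpred_prod // => i _.
by rewrite polyOverXsubC rpredD ?rpred_nat.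
Qed.

Lemma int_valued_poly_consecutive (x : R) (n : nat) (p : {poly R}) :
  x \is a Num.int -> (size p <= n.+1)%N ->
  (forall j, (j <= n)%N -> p.[x + j%:R] \is a Num.int) ->
  (forall m, p.[x + m%:R] \is a Num.int) /\ n`!%:R *: p \is a polyOver Num.int_num_subdef.
Proof.
move=> x_int; elim: n p => [|n IHn] p size_p p_int.
  have p_const := size1_polyC size_p.
  have p0_int : p`_0 \is a Num.int by have := p_int 0%N (leqnn 0); rewrite {1}p_const hornerC.
  rewrite p_const; split=> [m | ]; first by rewrite hornerC.
  by rewrite scale1r polyOverC.
set c := p`_n.+1; set W := shift_ffact_poly x n.+1; set r := p - c *: W.
have W_at m : W.[x + m%:R] = (m ^_ n.+1)%:R by apply: horner_shift_ffact_poly.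
have r_at m : r.[x + m%:R] = p.[x + m%:R] - c * (m ^_ n.+1)%:R.
  by rewrite hornerD hornerN hornerZ W_at.
have size_r : (size r <= n.+1)%N.
  exact: size_sub_lead_monic (shift_ffact_poly_monic _ _) (size_shift_ffact_poly _ _) size_p.
have [r_int r_fact_int] : (forall m, r.[x + m%:R] \is a Num.int) /\
                          n`!%:R *: r \is a polyOver Num.int_num_subdef.
  apply: IHn size_r _ => j j_le_n.
  by rewrite r_at ffact_small ?ltnS // mulr0 subr0 p_int ?(leqW j_le_n).
have c_fact_int : c * (n.+1)`!%:R \is a Num.int.
  have -> : c * (n.+1)`!%:R = p.[x + n.+1%:R] - r.[x + n.+1%:R].
    by rewrite r_at ffactnn opprB addrC subrK.
  by rewrite rpredB ?p_int.
have p_eq : p = r + c *: W by rewrite subrK.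
split=> [m | ].
  rewrite p_eq hornerD hornerZ W_at -bin_ffact natrM mulrCA mulrC.
  by rewrite rpredD // rpredM // rpred_nat.
rewrite p_eq scalerDr scalerA mulrC factS natrM -scalerA.
apply: rpredD; apply: polyOverZ => //; first exact: rpred_nat.
  by rewrite -natrM -factS.
exact: shift_ffact_poly_int.
Qed.

End IntegerValuedPolynomials.

Theorem corollary1p11 (k : nat) (f : {poly rat}) :
  f \is monic -> size f = (k + 2)%N ->
  (forall g : nat, (3 * k < g)%N ->
     exists n : nat, num_sg_genus_mult g (g - k) n /\
       n%:R = f.[g%:R] / (k.+1)`!%:R) ->
  forall i : nat, exists z : int, f`_i = z%:~R.
Proof.
move=> _ size_f count_f i.
have fact_neq0 : (k.+1)`!%:R != 0 :> rat by rewrite pnatr_eq0 -lt0n fact_gt0.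
set q := ((k.+1)`!%:R)^-1 *: f.
have size_q : (size q <= k.+2)%N by rewrite size_scale ?invr_eq0 // size_f addn2.
have q_int j : (j <= k.+1)%N -> q.[(3 * k).+1%:R + j%:R] \is a Num.int.
  have [n [_ n_eq]] := count_f ((3 * k).+1 + j)%N (leq_addr _ _).
  by rewrite hornerZ mulrC -natrD -n_eq rpred_nat.
have [_ f_int] := int_valued_poly_consecutive _ _ _ (rpred_nat _ _) size_q q_int.
by move: f_int; rewrite scalerA mulfV // scale1r => /polyOverP/(_ i)/intrP.
Qed.
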